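(* Consider the sub-$\ell^\infty$ structure on $\mathbb{R}^3$ defined by $X_1=\partial_x-\tfrac{y}{2}\partial_z$, $X_2=\partial_y+\tfrac{x}{2}\partial_z$. (a) Let $(\lambda,\gamma)$ be an extremal pair on $[0,T]$ with $\gamma$ nonconstant and control $u$, and suppose that for some $j\in\{1,2\}$ the restriction to some open interval $I$ is a $\varphi_j$-singular arc. Then $\varphi_j\equiv0$ on all of $[0,T]$ and $u_{3-j}$ is a.e. constantly equal to $1$ or constantly equal to $-1$ on $[0,T]$. (b) Conversely, every admissible trajectory for which, for some $i\in\{1,2\}$, $u_i$ is a.e. constantly equal to $1$ or a.e. constantly equal to $-1$, admits an extremal lift for which $\varphi_{3-i}\equiv0$ on the whole domain. (c) Every such admissible trajectory (with $u_i\equiv1$ or $u_i\equiv-1$ for some $i$) is a time-minimizer.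
   Context: Sub-$\ell^\infty$ structure defined by smooth vector fields $X_1,\dots,X_k$ on a manifold $M$: an admissible trajectory is an absolutely continuous curve $\gamma:[0,T]\to M$ together with a measurable control $u=(u_1,\dots,u_k):[0,T]\to\mathbb{R}^k$ with $|u_i(t)|\le1$ for all $i$ and a.e. $t$, such that $\dot\gamma(t)=\sum_i u_i(t)X_i(\gamma(t))$ for a.e. $t$. It is a time-minimizer (optimal) if no admissible trajectory joins $\gamma(0)$ to $\gamma(T)$ in time less than $T$. An extremal pair is a pair $(\lambda,\gamma)$ where $\gamma$ is admissible with control $u$ and $\lambda:[0,T]\to T^*M$ is absolutely continuous with $\lambda(t)\in T^*_{\gamma(t)}M\setminus\{0\}$, such that, with $\mathcal H(\lambda,p,u)=\sum_i u_i\langle\lambda,X_i(p)\rangle$, in canonical coordinates $\dot\lambda=-\partial_p\mathcal H(\lambda,\gamma,u)$, $\dot\gamma=\partial_\lambda\mathcal H(\lambda,\gamma,u)$ a.e., and there is a constant $\lambda_0\ge0$ with $\sum_iu_i(t)\langle\lambda(t),X_i(\gamma(t))\rangle=\sum_i|\langle\lambda(t),X_i(\gamma(t))\rangle|=\lambda_0$ for a.e. $t$; $\gamma$ is then an extremal trajectory and $\lambda$ an extremal lift. The switching functions are $\varphi_j(t)=\langle\lambda(t),X_j(\gamma(t))\rangle$. The restriction of an extremal pair to an open interval $I$ is a $\varphi_j$-singular arc if $\varphi_j\equiv0$ on $I$. *)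

From Stdlib Require Import Reals List.
Import ListNotations.
Open Scope R_scope.

Record V3 := mkV3 { vx : R; vy : R; vz : R }.

Definition vzero : V3 := mkV3 0 0 0.
Definition vadd (v w : V3) : V3 := mkV3 (vx v + vx w) (vy v + vy w) (vz v + vz w).
Definition vscal (a : R) (v : V3) : V3 := mkV3 (a * vx v) (a * vy v) (a * vz v).
(* pairing <lambda, v> of a covector with a vector in canonical coordinates *)
Definition dot (l v : V3) : R := vx l * vx v + vy l * vy v + vz l * vz v.
Definition comp (k : nat) (v : V3) : R :=
  match k with 0%nat => vx v | 1%nat => vy v | _ => vz v end.
Definition ek (k : nat) : V3 :=
  match k with 0%nat => mkV3 1 0 0 | 1%nat => mkV3 0 1 0 | _ => mkV3 0 0 1 end.

Definition X (i : nat) (p : V3) : V3 :=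
  match i with
  | 1%nat => mkV3 1 0 (- vy p / 2)
  | 2%nat => mkV3 0 1 (vx p / 2)
  | _ => vzero
  end.

Definition field_of (w : nat -> R) (p : V3) : V3 :=
  vadd (vscal (w 1%nat) (X 1 p)) (vscal (w 2%nat) (X 2 p)).

Definition Hfun (l p : V3) (w : nat -> R) : R :=
  w 1%nat * dot l (X 1 p) + w 2%nat * dot l (X 2 p).

Definition covers (S : R -> Prop) (a b : nat -> R) : Prop :=
  (forall n, a n <= b n) /\ (forall t, S t -> exists n, a n < t < b n).

Definition outer_le (S : R -> Prop) (r : R) : Prop :=
  exists a b : nat -> R, covers S a b /\
    forall N, sum_f_R0 (fun n => b n - a n) N <= r.

Definition null (S : R -> Prop) : Prop :=
  forall eps, eps > 0 -> outer_le S eps.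

Definition ae_on (T : R) (P : R -> Prop) : Prop :=
  null (fun t => 0 <= t <= T /\ ~ P t).

(* Caratheodory criterion: m*(A) >= m*(A /\ E) + m*(A \ E) for all A *)
Definition meas_set (E : R -> Prop) : Prop :=
  forall (A : R -> Prop) r, outer_le A r ->
    forall eps, eps > 0 ->
      exists r1 r2, outer_le (fun t => A t /\ E t) r1 /\
                    outer_le (fun t => A t /\ ~ E t) r2 /\ r1 + r2 <= r + eps.

Definition meas_fun_on (T : R) (f : R -> R) : Prop :=
  forall c, meas_set (fun t => 0 <= t <= T /\ f t > c).

Fixpoint disj_in (lo hi : R) (l : list (R * R)) : Prop :=
  match l with
  | [] => True
  | (a, b) :: l' => lo <= a /\ a <= b /\ b <= hi /\ disj_in b hi l'
  end.

Definition sum_len (l : list (R * R)) : R :=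
  fold_right (fun ab s => snd ab - fst ab + s) 0 l.

Definition sum_var (f : R -> R) (l : list (R * R)) : R :=
  fold_right (fun ab s => Rabs (f (snd ab) - f (fst ab)) + s) 0 l.

Definition abs_cont_on (T : R) (f : R -> R) : Prop :=
  forall eps, eps > 0 -> exists delta, delta > 0 /\
    forall l, disj_in 0 T l -> sum_len l < delta -> sum_var f l < eps.

Definition abs_cont_curve (T : R) (g : R -> V3) : Prop :=
  forall k, (k <= 2)%nat -> abs_cont_on T (fun t => comp k (g t)).

Definition admissible (T : R) (g : R -> V3) (u : nat -> R -> R) : Prop :=
  0 <= T /\
  abs_cont_curve T g /\
  (forall i, (i = 1 \/ i = 2)%nat ->
      meas_fun_on T (u i) /\ ae_on T (fun t => Rabs (u i t) <= 1)) /\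
  ae_on T (fun t => forall k, (k <= 2)%nat ->
      derivable_pt_lim (fun s => comp k (g s)) t
                       (comp k (field_of (fun i => u i t) (g t)))).

Definition phi (j : nat) (l g : R -> V3) (t : R) : R := dot (l t) (X j (g t)).

Definition extremal_pair (T : R) (l g : R -> V3) (u : nat -> R -> R) : Prop :=
  admissible T g u /\
  abs_cont_curve T l /\
  (forall t, 0 <= t <= T -> l t <> vzero) /\
  ae_on T (fun t => forall k, (k <= 2)%nat ->
     (* lambda_k' = - dH/dp_k *)
     (exists d, derivable_pt_lim
                  (fun s => Hfun (l t) (vadd (g t) (vscal s (ek k))) (fun i => u i t)) 0 d
              /\ derivable_pt_lim (fun s => comp k (l s)) t (- d)) /\
     (* gamma_k' = dH/dlambda_k *)
     (exists d, derivable_pt_lim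
                  (fun s => Hfun (vadd (l t) (vscal s (ek k))) (g t) (fun i => u i t)) 0 d
              /\ derivable_pt_lim (fun s => comp k (g s)) t d)) /\
  exists l0, 0 <= l0 /\
    ae_on T (fun t =>
      u 1%nat t * phi 1 l g t + u 2%nat t * phi 2 l g t = l0 /\
      Rabs (phi 1 l g t) + Rabs (phi 2 l g t) = l0).

Definition time_minimizer (T : R) (g : R -> V3) : Prop :=
  forall T' g' u', admissible T' g' u' -> g' 0 = g 0 -> g' T' = g T -> T <= T'.

Definition const_pm1 (T : R) (v : R -> R) : Prop :=
  ae_on T (fun t => v t = 1) \/ ae_on T (fun t => v t = -1).

(* Along an extremal the Hamiltonian does not depend on z, so the z-component of the
   covector is a constant L, and the switching functions phi1 = lx - (L/2) y and
   phi2 = ly + (L/2) x satisfy phi1' = -L u2 and phi2' = L u1.  If L = 0 both are constant: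
   a phi_j-singular arc forces phi_j = 0 everywhere, and the maximum condition pins u_(3-j) to
   the sign of the nonzero constant phi_(3-j).  If L <> 0, then u_(3-j) = 0 on the arc, so the
   maximised Hamiltonian is 0; hence both switching functions vanish, then both controls do,
   and the trajectory is constant.  Conversely, if u_i = s in {1, -1}, the constant covector
   s dx_i is an extremal lift, and s x_i grows with speed exactly 1 along the trajectory but
   at most 1 along any admissible one, which gives minimality.
   The analytic tool is the mean-value inequality for an absolutely continuous f with f' <= c
   almost everywhere, proved by a continuity induction that charges the exceptional null set
   to the variation of f on a cover of small total length. *)

From Pilot Require Import Defs.
From Stdlib Require Import Reals Lra Lia List Classical FunctionalExtensionality.
Import ListNotations.
Open Scope R_scope.

Lemma null_subset (A B : R -> Prop) : null A -> (forall t, B t -> A t) -> null B.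
Proof.
  intros HA HBA eps Heps. destruct (HA eps Heps) as [a [b [[Hab Hcov] Hsum]]].
  exists a, b. split; [split|]; auto.
Qed.

Definition interleave (f g : nat -> R) (n : nat) : R :=
  if Nat.even n then f (Nat.div2 n) else g (Nat.div2 n).

Lemma interleave_double f g n : interleave f g (2 * n) = f n.
Proof. unfold interleave. rewrite Nat.even_even, Nat.div2_double. reflexivity. Qed.

Lemma interleave_double_succ f g n : interleave f g (S (2 * n)) = g n.
Proof.
  unfold interleave. replace (S (2 * n)) with (2 * n + 1)%nat by lia.
  rewrite Nat.even_odd. replace (2 * n + 1)%nat with (S (2 * n)) by lia.
  rewrite Nat.div2_succ_double. reflexivity.
Qed.

Lemma sum_interleave f g N :
  sum_f_R0 (interleave f g) (S (2 * N)) = sum_f_R0 f N + sum_f_R0 g N.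
Proof.
  induction N as [|N IH].
  - simpl. unfold interleave. simpl. ring.
  - replace (S (2 * S N)) with (S (S (S (2 * N)))) by lia.
    rewrite tech5, tech5, IH, tech5, tech5. replace (S (S (2 * N))) with (2 * S N)%nat by lia.
    rewrite interleave_double, interleave_double_succ. ring.
Qed.

Lemma sum_f_R0_le_nonneg (h : nat -> R) N M :
  (forall n, 0 <= h n) -> (N <= M)%nat -> sum_f_R0 h N <= sum_f_R0 h M.
Proof.
  intros Hh HNM. induction HNM as [|M _ IH]; [lra|].
  rewrite tech5. specialize (Hh (S M)). lra.
Qed.

Lemma null_union (A B : R -> Prop) : null A -> null B -> null (fun t => A t \/ B t).
Proof.
  intros HA HB eps Heps.
  destruct (HA (eps / 2) ltac:(lra)) as [a [b [[Hab Hcov] Hsum]]].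
  destruct (HB (eps / 2) ltac:(lra)) as [a' [b' [[Hab' Hcov'] Hsum']]].
  exists (interleave a a'), (interleave b b'). split; [split|].
  - intros n. unfold interleave. destruct (Nat.even n); auto.
  - intros t [Ht|Ht].
    + destruct (Hcov t Ht) as [n Hn]. exists (2 * n)%nat. rewrite !interleave_double. exact Hn.
    + destruct (Hcov' t Ht) as [n Hn]. exists (S (2 * n)).
      rewrite !interleave_double_succ. exact Hn.
  - intros N.
    set (len := interleave (fun n => b n - a n) (fun n => b' n - a' n)).
    assert (Hlen : forall M, sum_f_R0 (fun n => interleave b b' n - interleave a a' n) M
                             = sum_f_R0 len M).
    { intros M. apply sum_eq. intros n _. unfold len, interleave. now destruct (Nat.even n). }
    rewrite Hlen. apply Rle_trans with (sum_f_R0 len (S (2 * N))).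
    + apply sum_f_R0_le_nonneg; [|lia]. intros n. unfold len, interleave.
      destruct (Nat.even n); [specialize (Hab (Nat.div2 n)) | specialize (Hab' (Nat.div2 n))]; lra.
    + unfold len. rewrite sum_interleave. specialize (Hsum N). specialize (Hsum' N). lra.
Qed.

Lemma null_singleton (c : R) : null (fun t => t = c).
Proof.
  intros eps Heps.
  exists (fun n => match n with O => c - eps / 4 | _ => 0 end),
         (fun n => match n with O => c + eps / 4 | _ => 0 end).
  split; [split|].
  - intros [|n]; lra.
  - intros t ->. exists O. lra.
  - intros N. induction N; simpl; lra.
Qed.

Lemma ae_on_impl T (P Q : R -> Prop) :
  ae_on T P -> (forall t, 0 <= t <= T -> P t -> Q t) -> ae_on T Q.
Proof.
  intros HP HPQ. apply (null_subset _ _ HP). intros t [Ht HnQ]. split; auto.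
Qed.

Lemma ae_on_and T (P Q : R -> Prop) :
  ae_on T P -> ae_on T Q -> ae_on T (fun t => P t /\ Q t).
Proof.
  intros HP HQ. apply (null_subset _ _ (null_union _ _ HP HQ)). intros t [Ht HPQ].
  destruct (classic (P t)); [right | left]; tauto.
Qed.

Lemma ae_on_neq T c : ae_on T (fun t => t <> c).
Proof.
  apply (null_subset _ _ (null_singleton c)). intros t [_ Ht]. now apply NNPP.
Qed.

Lemma disj_in_lower lo lo' hi l : lo' <= lo -> disj_in lo hi l -> disj_in lo' hi l.
Proof. destruct l as [|[a b] l]; simpl; auto. intros ? (? & ? & ? & ?). repeat split; auto; lra. Qed.

Lemma disj_in_upper lo hi hi' l : hi <= hi' -> disj_in lo hi l -> disj_in lo hi' l.
Proof.
  revert lo. induction l as [|[a b] l IH]; simpl; auto.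
  intros lo ? (? & ? & ? & ?). repeat split; auto; lra.
Qed.

Lemma disj_in_app lo mid hi l1 l2 : lo <= mid -> mid <= hi ->
  disj_in lo mid l1 -> disj_in mid hi l2 -> disj_in lo hi (l1 ++ l2).
Proof.
  revert lo. induction l1 as [|[a b] l IH]; simpl; intros lo ? ? H1 H2.
  - apply (disj_in_lower mid); [lra | exact H2].
  - destruct H1 as (? & ? & ? & ?). repeat split; try lra. apply IH; auto.
Qed.

Lemma disj_in_raise lo hi A l :
  disj_in lo hi l -> (forall p, In p l -> A <= fst p) -> disj_in A hi l.
Proof.
  destruct l as [|[a b] l]; simpl; auto. intros (? & ? & ? & ?) HA.
  specialize (HA (a, b) (or_introl eq_refl)). simpl in HA. repeat split; auto.
Qed.

Lemma disj_in_filter {I : Type} (h : I -> R * R) (P : I -> bool) lo hi l :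
  disj_in lo hi (map h l) -> disj_in lo hi (map h (filter P l)).
Proof.
  revert lo. induction l as [|x l IH]; simpl; intros lo Hl; auto.
  destruct (P x); simpl; destruct (h x) as [a b]; destruct Hl as (? & ? & ? & ?).
  - repeat split; auto.
  - apply (disj_in_lower b); auto. lra.
Qed.

Lemma sum_len_filter {I : Type} (h : I -> R * R) (P : I -> bool) l :
  sum_len (map h l) =
  sum_len (map h (filter P l)) + sum_len (map h (filter (fun x => negb (P x)) l)).
Proof. induction l as [|x l IH]; simpl; [ring|]. destruct (P x); simpl; rewrite IH; ring. Qed.

Lemma sum_len_le_span lo hi B l : lo <= B ->
  disj_in lo hi l -> (forall p, In p l -> snd p <= B) -> sum_len l <= B - lo.
Proof.
  revert lo. induction l as [|[a b] l IH]; simpl; intros lo HB Hl Hend; [lra|].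
  destruct Hl as (? & ? & ? & Hl).
  assert (b <= B) by exact (Hend (a, b) (or_introl eq_refl)).
  specialize (IH b ltac:(lra) Hl (fun p Hp => Hend p (or_intror Hp))). lra.
Qed.

Lemma sum_var_app f l1 l2 : sum_var f (l1 ++ l2) = sum_var f l1 + sum_var f l2.
Proof. induction l1 as [|x l IH]; simpl; [ring|]. unfold sum_var in *. simpl. rewrite IH. ring. Qed.

(* An interval [((p, q), n)] of [l] lies inside the [n]-th interval of the cover [(a, b)]. *)
Definition subordinate (a b : nat -> R) (l : list ((R * R) * nat)) : Prop :=
  forall x, In x l -> a (snd x) <= fst (fst x) /\ snd (fst x) <= b (snd x).

Lemma subordinate_filter a b P l : subordinate a b l -> subordinate a b (filter P l).
Proof. intros Hl x Hx. apply filter_In in Hx. exact (Hl x (proj1 Hx)). Qed.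

Lemma sum_len_subordinate_index (a b : nat -> R) n l lo hi :
  a n <= b n -> disj_in lo hi (map fst l) -> subordinate a b l ->
  (forall x, In x l -> snd x = n) -> sum_len (map fst l) <= b n - a n.
Proof.
  intros Hab Hl Hsub Hn. apply (sum_len_le_span (a n) hi); [exact Hab| |].
  - apply (disj_in_raise lo); [exact Hl|]. intros p Hp. apply in_map_iff in Hp as [x [<- Hx]].
    rewrite <- (Hn x Hx). apply Hsub, Hx.
  - intros p Hp. apply in_map_iff in Hp as [x [<- Hx]].
    rewrite <- (Hn x Hx). apply Hsub, Hx.
Qed.

Lemma sum_len_subordinate_le (a b : nat -> R) K l lo hi :
  (forall n, a n <= b n) -> disj_in lo hi (map fst l) -> subordinate a b l ->
  (forall x, In x l -> (snd x <= K)%nat) ->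
  sum_len (map fst l) <= sum_f_R0 (fun n => b n - a n) K.
Proof.
  intros Hab. revert l. induction K as [|K IH]; intros l Hl Hsub HK.
  - apply (sum_len_subordinate_index a b 0 l lo hi (Hab 0%nat) Hl Hsub).
    intros x Hx. specialize (HK x Hx). lia.
  - set (P := fun x : (R * R) * nat => Nat.eqb (snd x) (S K)).
    rewrite (sum_len_filter fst P), tech5.
    assert (Hlast : sum_len (map fst (filter P l)) <= b (S K) - a (S K)).
    { apply (sum_len_subordinate_index a b _ _ lo hi (Hab _)).
      - apply disj_in_filter, Hl.
      - apply subordinate_filter, Hsub.
      - intros x Hx. apply filter_In in Hx. apply Nat.eqb_eq, Hx. }
    assert (Hrest : sum_len (map fst (filter (fun x => negb (P x)) l))
                    <= sum_f_R0 (fun n => b n - a n) K).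
    { apply IH.
      - apply disj_in_filter, Hl.
      - apply subordinate_filter, Hsub.
      - intros x Hx. apply filter_In in Hx as [Hx HP].
        apply Bool.negb_true_iff, Nat.eqb_neq in HP. specialize (HK x Hx). lia. }
    lra.
Qed.

Lemma exists_index_bound (l : list ((R * R) * nat)) :
  exists K, forall x, In x l -> (snd x <= K)%nat.
Proof.
  induction l as [|y l [K HK]]; [exists O; intros x []|].
  exists (Nat.max K (snd y)). intros x [<-|Hx]; [lia|]. specialize (HK x Hx). lia.
Qed.

Lemma sum_len_subordinate_cover S (a b : nat -> R) r l lo hi :
  covers S a b -> (forall N, sum_f_R0 (fun n => b n - a n) N <= r) ->
  disj_in lo hi (map fst l) -> subordinate a b l -> sum_len (map fst l) <= r.
Proof.
  intros [Hab _] Hr Hl Hsub. destruct (exists_index_bound l) as [K HK].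
  apply Rle_trans with (2 := Hr K). exact (sum_len_subordinate_le a b K l lo hi Hab Hl Hsub HK).
Qed.

Lemma sum_var_lin a b f g l :
  sum_var (fun t => a * f t + b * g t) l <= Rabs a * sum_var f l + Rabs b * sum_var g l.
Proof.
  induction l as [|x l IH]; unfold sum_var in *; simpl; [lra|].
  replace (a * f (snd x) + b * g (snd x) - (a * f (fst x) + b * g (fst x)))
    with (a * (f (snd x) - f (fst x)) + b * (g (snd x) - g (fst x))) by ring.
  eapply Rle_trans; [apply Rplus_le_compat_r, Rabs_triang|]. rewrite !Rabs_mult. lra.
Qed.

Lemma sum_var_le_sum_len f lo hi l : disj_in lo hi l ->
  (forall p q, p <= q -> Rabs (f q - f p) <= q - p) -> sum_var f l <= sum_len l.
Proof.
  revert lo. induction l as [|[p q] l IH]; unfold sum_var, sum_len in *; simpl; intros lo Hl Hf; [lra|].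
  destruct Hl as (? & Hpq & ? & Hl). specialize (IH q Hl Hf). specialize (Hf p q Hpq). lra.
Qed.

Lemma abs_cont_on_ext T f g : (forall t, f t = g t) -> abs_cont_on T f -> abs_cont_on T g.
Proof. intros Hfg. replace g with f; [auto | now apply functional_extensionality]. Qed.

Lemma abs_cont_on_lin T a b f g : abs_cont_on T f -> abs_cont_on T g ->
  abs_cont_on T (fun t => a * f t + b * g t).
Proof.
  intros Hf Hg eps Heps.
  pose proof (Rabs_pos a). pose proof (Rabs_pos b).
  set (e := eps / (Rabs a + Rabs b + 1)).
  assert (He : e > 0) by (unfold e; apply Rdiv_lt_0_compat; lra).
  assert (Ee : e * (Rabs a + Rabs b + 1) = eps) by (unfold e; field; lra).
  destruct (Hf e He) as [d1 [Hd1 H1]]. destruct (Hg e He) as [d2 [Hd2 H2]].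
  exists (Rmin d1 d2). split; [apply Rmin_pos; lra|]. intros l Hl Hlen.
  specialize (H1 l Hl ltac:(pose proof (Rmin_l d1 d2); lra)).
  specialize (H2 l Hl ltac:(pose proof (Rmin_r d1 d2); lra)).
  eapply Rle_lt_trans; [apply sum_var_lin|].
  assert (Rabs a * sum_var f l <= Rabs a * e) by (apply Rmult_le_compat_l; lra).
  assert (Rabs b * sum_var g l <= Rabs b * e) by (apply Rmult_le_compat_l; lra).
  nra.
Qed.

Lemma abs_cont_on_lipschitz T f :
  (forall p q, p <= q -> Rabs (f q - f p) <= q - p) -> abs_cont_on T f.
Proof.
  intros Hf eps Heps. exists eps. split; auto. intros l Hl Hlen.
  pose proof (sum_var_le_sum_len f 0 T l Hl Hf). lra.
Qed.

Lemma abs_cont_on_id T : abs_cont_on T (fun t => t).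
Proof. apply abs_cont_on_lipschitz. intros p q H. rewrite Rabs_right; lra. Qed.

Lemma abs_cont_on_const T k : abs_cont_on T (fun _ => k).
Proof. apply abs_cont_on_lipschitz. intros p q H. rewrite Rminus_diag, Rabs_R0. lra. Qed.

Lemma abs_cont_on_continuous T f t : abs_cont_on T f -> 0 <= t <= T ->
  forall eps, eps > 0 -> exists delta, delta > 0 /\
    forall s, 0 <= s <= T -> Rabs (s - t) < delta -> Rabs (f s - f t) < eps.
Proof.
  intros Hf Ht eps Heps. destruct (Hf eps Heps) as [d [Hd H]]. exists d. split; auto.
  intros s Hs Hst. unfold sum_var, sum_len in H. destruct (Rle_dec s t).
  - rewrite Rabs_left1 in Hst by lra. rewrite Rabs_minus_sym.
    specialize (H [(s, t)] ltac:(simpl; repeat split; lra) ltac:(simpl; lra)). simpl in H. lra.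
  - rewrite Rabs_right in Hst by lra.
    specialize (H [(t, s)] ltac:(simpl; repeat split; lra) ltac:(simpl; lra)). simpl in H. lra.
Qed.

Lemma derivable_pt_lim_affine f x B :
  (forall h, f (x + h) = f x + B * h) -> derivable_pt_lim f x B.
Proof.
  intros Hf eps Heps. exists (mkposreal 1 Rlt_0_1). intros h Hh _.
  rewrite Hf. replace ((f x + B * h - f x) / h - B) with 0 by (field; auto).
  rewrite Rabs_R0. lra.
Qed.

Lemma derivable_pt_lim_locally_const f t r : r > 0 ->
  (forall h, Rabs h < r -> f (t + h) = f t) -> derivable_pt_lim f t 0.
Proof.
  intros Hr Hf eps Heps. exists (mkposreal r Hr). intros h Hh Hhr. simpl in Hhr.
  rewrite Hf by exact Hhr. replace ((f t - f t) / h - 0) with 0 by (field; auto).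
  rewrite Rabs_R0. lra.
Qed.

Lemma derivable_pt_lim_vanishing f a b t d : a < b -> a <= t <= b ->
  (forall s, a <= s <= b -> f s = 0) -> derivable_pt_lim f t d -> d = 0.
Proof.
  intros Hab Ht Hz Hd. apply NNPP. intro Hne.
  destruct (Hd (Rabs d) (Rabs_pos_lt d Hne)) as [r Hr].
  set (m := Rmin (r / 2) ((b - a) / 2)).
  assert (Hm : 0 < m /\ m < r /\ m <= (b - a) / 2).
  { unfold m, Rmin. pose proof (cond_pos r). destruct Rle_dec; lra. }
  (* step towards the farther endpoint, so that [t + h] stays in [[a, b]] *)
  set (h := if Rle_dec t ((a + b) / 2) then m else - m).
  assert (Hh : a <= t + h <= b /\ h <> 0 /\ Rabs h < r).
  { unfold h. destruct Rle_dec; [rewrite Rabs_right | rewrite Rabs_left]; repeat split; lra. }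
  specialize (Hr h (proj1 (proj2 Hh)) (proj2 (proj2 Hh))).
  rewrite (Hz (t + h)), (Hz t) in Hr by lra.
  replace ((0 - 0) / h - d) with (- d) in Hr by (field; apply Hh).
  rewrite Rabs_Ropp in Hr. lra.
Qed.

Lemma derivable_pt_lim_chord_le f m d eta : derivable_pt_lim f m d -> eta > 0 ->
  exists r, r > 0 /\ forall y z, m - r < y <= m -> m <= z < m + r ->
    f z - f y <= (d + eta) * (z - y).
Proof.
  intros Hd Heta. destruct (Hd eta Heta) as [r Hr]. exists r. split; [apply cond_pos|].
  assert (Hq : forall x, x <> m -> Rabs (x - m) < r -> (f x - f m) / (x - m) < d + eta).
  { intros x Hx Hxr. specialize (Hr (x - m) ltac:(lra) Hxr).
    replace (m + (x - m)) with x in Hr by ring. apply Rabs_def2 in Hr. lra. }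
  intros y z Hy Hz.
  assert (Hleft : f m - f y <= (d + eta) * (m - y)).
  { destruct (Req_dec y m) as [->|Hne]; [nra|].
    specialize (Hq y Hne ltac:(rewrite Rabs_left; lra)).
    set (q := (f y - f m) / (y - m)) in Hq.
    assert (f y - f m = q * (y - m)) by (unfold q; field; lra). nra. }
  assert (Hright : f z - f m <= (d + eta) * (z - m)).
  { destruct (Req_dec z m) as [->|Hne]; [nra|].
    specialize (Hq z Hne ltac:(rewrite Rabs_right; lra)).
    set (q := (f z - f m) / (z - m)) in Hq.
    assert (f z - f m = q * (z - m)) by (unfold q; field; lra). nra. }
  lra.
Qed.

Section IncrementBound.

Variables (T c : R) (f : R -> R).
Hypotheses (Hc : 0 <= c) (Hf : abs_cont_on T f)
  (Hderiv : ae_on T (fun t => exists d, derivable_pt_lim f t d /\ d <= c)).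

Section Controlled.

Variables (s eta delta : R) (a b : nat -> R).
Hypotheses (Hs : 0 <= s) (Heta : eta > 0) (Hdelta : delta > 0)
  (Hsmall : forall l, disj_in 0 T l -> sum_len l < delta -> sum_var f l < eta)
  (Hcov : covers (fun t => 0 <= t <= T /\ ~ (exists d, derivable_pt_lim f t d /\ d <= c)) a b)
  (Hcov_len : forall N, sum_f_R0 (fun n => b n - a n) N <= delta / 2).

(* Up to [x], the slope bound [c + eta] fails only by the variation of [f] on finitely many
   intervals of the cover of the points where [f' <= c] is not known. *)
Definition controlled (x : R) : Prop :=
  exists l : list ((R * R) * nat), disj_in s x (map fst l) /\ subordinate a b l /\
    f x - f s <= (c + eta) * (x - s) + sum_var f (map fst l).

Lemma controlled_start : controlled s.
Proof. exists []. split; [exact I|]. split; [intros ? []|]. unfold sum_var. simpl. lra. Qed.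

Lemma controlled_bound x : x <= T -> controlled x -> f x - f s <= (c + eta) * (x - s) + eta.
Proof.
  intros HxT [l [Hl [Hsub Hinc]]].
  assert (Hlen := sum_len_subordinate_cover _ a b _ l s x Hcov Hcov_len Hl Hsub).
  assert (Hl0T : disj_in 0 T (map fst l)) by (apply (disj_in_upper _ x); [lra|]; exact (disj_in_lower s 0 x _ Hs Hl)).
  specialize (Hsmall _ Hl0T ltac:(lra)). lra.
Qed.

Lemma controlled_extend m : 0 <= m <= T -> exists r, r > 0 /\
  forall y z, s <= y <= m -> m <= z -> z - y < r -> controlled y -> controlled z.
Proof.
  intros Hm.
  destruct (classic (exists d, derivable_pt_lim f m d /\ d <= c)) as [[d [Hd Hdc]]|Hbad].
  - destruct (derivable_pt_lim_chord_le f m d eta Hd Heta) as [r [Hr Hchord]].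
    exists r. split; [exact Hr|]. intros y z Hy Hz Hyz [l [Hl [Hsub Hinc]]].
    specialize (Hchord y z ltac:(lra) ltac:(lra)).
    exists l. split; [apply (disj_in_upper _ y); [lra | exact Hl]|]. split; [exact Hsub|].
    assert ((d + eta) * (z - y) <= (c + eta) * (z - y)) by (apply Rmult_le_compat_r; lra).
    lra.
  - destruct (proj2 Hcov m (conj Hm Hbad)) as [n Hn].
    exists (Rmin (m - a n) (b n - m)). split; [apply Rmin_pos; lra|].
    intros y z Hy Hz Hyz [l [Hl [Hsub Hinc]]].
    pose proof (Rmin_l (m - a n) (b n - m)). pose proof (Rmin_r (m - a n) (b n - m)).
    exists (l ++ [((y, z), n)]). split; [|split].
    + rewrite map_app. apply (disj_in_app s y z); simpl; try lra; auto.
    + intros x Hx. apply in_app_or in Hx as [Hx|[<-|[]]]; [exact (Hsub x Hx)|]. simpl. lra.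
    + rewrite map_app, sum_var_app. unfold sum_var at 2. simpl.
      pose proof (Rle_abs (f z - f y)).
      assert ((c + eta) * (y - s) <= (c + eta) * (z - s)) by (apply Rmult_le_compat_l; lra).
      lra.
Qed.

Lemma controlled_upto t : s <= t <= T -> controlled t.
Proof.
  intros Ht.
  set (S := fun x => s <= x <= t /\ controlled x).
  destruct (completeness S) as [m [Hub Hlub]].
  { exists t. intros x [Hx _]. lra. }
  { exists s. split; [lra | exact controlled_start]. }
  assert (Hsm : s <= m) by (apply Hub; split; [lra | exact controlled_start]).
  assert (Hmt : m <= t) by (apply Hlub; intros x [Hx _]; lra).
  destruct (controlled_extend m ltac:(lra)) as [r [Hr Hext]].
  assert (Hnear : exists y, S y /\ m - r / 2 < y).
  { apply NNPP. intro Hn. enough (m <= m - r / 2) by lra.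
    apply Hlub. intros x Hx. apply Rnot_lt_le. intro. apply Hn. now exists x. }
  destruct Hnear as [y [[Hy Hcy] Hmy]].
  assert (Hym : y <= m) by (apply Hub; split; auto).
  set (z := Rmin (m + r / 2) t).
  assert (Hz : m <= z <= t /\ z <= m + r / 2) by (unfold z, Rmin; destruct Rle_dec; lra).
  assert (Hcz : controlled z) by (apply (Hext y); auto; lra).
  assert (Hzm : z <= m) by (apply Hub; split; [lra | exact Hcz]).
  (* [z] cannot exceed the supremum [m], so the minimum defining it is [t] *)
  replace t with z; [exact Hcz|]. unfold z, Rmin in *. destruct Rle_dec; lra.
Qed.

End Controlled.

Lemma abs_cont_increment_le s t : 0 <= s -> s <= t -> t <= T -> f t - f s <= c * (t - s).
Proof.
  intros Hs Hst HtT. apply Rnot_lt_le. intro Hlt.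
  set (eta := (f t - f s - c * (t - s)) / (2 * (t - s + 1))).
  assert (Heta : eta > 0) by (unfold eta; apply Rdiv_lt_0_compat; lra).
  assert (Eeta : eta * (t - s + 1) = (f t - f s - c * (t - s)) / 2) by (unfold eta; field; lra).
  destruct (Hf eta Heta) as [delta [Hdelta Hsmall]].
  destruct (Hderiv (delta / 2) ltac:(lra)) as [a [b [Hcov Hcov_len]]].
  assert (Hct : controlled s eta a b t) by (eapply controlled_upto; eauto; lra).
  pose proof (controlled_bound s eta delta a b Hs Hdelta Hsmall Hcov Hcov_len t HtT Hct).
  nra.
Qed.

End IncrementBound.

Lemma abs_cont_deriv0_const T f : abs_cont_on T f ->
  ae_on T (fun t => derivable_pt_lim f t 0) ->
  forall s t, 0 <= s <= T -> 0 <= t <= T -> f t = f s.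
Proof.
  intros Hf Hd.
  assert (Hle : forall s t, 0 <= s -> s <= t -> t <= T -> f t = f s).
  { intros s t Hs Hst HtT.
    assert (Hup : f t - f s <= 0 * (t - s)).
    { apply (abs_cont_increment_le T 0 f); auto; [lra|].
      apply (ae_on_impl _ _ _ Hd). intros u _ Hu. exists 0. split; [exact Hu | lra]. }
    assert (Hdown : -1 * f t - -1 * f s <= 0 * (t - s)).
    { apply (abs_cont_increment_le T 0 (fun x => -1 * f x)); auto; [lra | |].
      - apply (abs_cont_on_ext T (fun x => -1 * f x + 0 * x)); [intros; ring|].
        apply abs_cont_on_lin; [exact Hf | apply abs_cont_on_id].
      - apply (ae_on_impl _ _ _ Hd). intros u _ Hu. exists (-1 * 0).
        split; [exact (derivable_pt_lim_scal f (-1) u 0 Hu) | lra]. }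
    lra. }
  intros s t Hs Ht. destruct (Rle_dec s t); [apply Hle | symmetry; apply Hle]; lra.
Qed.

Definition clamp (a b t : R) : R := Rmin (Rmax t a) b.

Lemma ae_on_meets_interval T (P : R -> Prop) a b : 0 <= a -> a < b -> b <= T ->
  ae_on T P -> exists t, a < t < b /\ P t.
Proof.
  intros Ha Hab HbT HP. apply NNPP. intro Hnone.
  (* otherwise [clamp a b], which rises from [a] to [b], would be flat almost everywhere *)
  assert (Hlip : forall p q, p <= q -> Rabs (clamp a b q - clamp a b p) <= q - p).
  { intros p q Hpq. unfold clamp, Rmin, Rmax. apply Rabs_le. repeat destruct Rle_dec; lra. }
  assert (Hflat : ae_on T (fun t => derivable_pt_lim (clamp a b) t 0)).
  { apply (ae_on_impl _ _ _ (ae_on_and _ _ _ HP (ae_on_and _ _ _ (ae_on_neq T a) (ae_on_neq T b)))).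
    intros t _ [Ht [Hta Htb]].
    destruct (Rtotal_order t a) as [Hlo | [Heq | Hgt]]; [| contradiction |].
    - apply (derivable_pt_lim_locally_const _ _ (a - t)); [lra|]. intros h Hh.
      apply Rabs_def2 in Hh. unfold clamp, Rmin, Rmax. repeat destruct Rle_dec; lra.
    - destruct (Rtotal_order t b) as [Hlt | [Heq | Hhi]]; [| contradiction |].
      + exfalso. apply Hnone. exists t. split; [lra | exact Ht].
      + apply (derivable_pt_lim_locally_const _ _ (t - b)); [lra|]. intros h Hh.
        apply Rabs_def2 in Hh. unfold clamp, Rmin, Rmax. repeat destruct Rle_dec; lra. }
  assert (Hend := abs_cont_deriv0_const T (clamp a b) (abs_cont_on_lipschitz T _ Hlip) Hflat
                    a b ltac:(lra) ltac:(lra)).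
  unfold clamp, Rmin, Rmax in Hend. repeat destruct Rle_dec; lra.
Qed.

Lemma abs_cont_ae_zero T f : 0 < T -> abs_cont_on T f -> ae_on T (fun t => f t = 0) ->
  forall t, 0 <= t <= T -> f t = 0.
Proof.
  intros HT Hf Hz t Ht. apply NNPP. intro Hne.
  destruct (abs_cont_on_continuous T f t Hf Ht (Rabs (f t)) (Rabs_pos_lt _ Hne)) as [d [Hd Hnear]].
  set (lo := Rmax 0 (t - d / 2)). set (hi := Rmin T (t + d / 2)).
  assert (0 <= lo /\ lo < hi /\ hi <= T /\ t - d / 2 <= lo /\ hi <= t + d / 2)
    by (unfold lo, hi, Rmin, Rmax; repeat destruct Rle_dec; lra).
  destruct (ae_on_meets_interval T _ lo hi ltac:(lra) ltac:(lra) ltac:(lra) Hz) as [s [Hs Hfs]].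
  specialize (Hnear s ltac:(lra) ltac:(apply Rabs_def1; lra)).
  rewrite Hfs, Rminus_0_l, Rabs_Ropp in Hnear. lra.
Qed.

Lemma Rabs_add_eq0 x y : Rabs x + Rabs y = 0 -> x = 0 /\ y = 0.
Proof.
  intros H. pose proof (Rabs_pos x). pose proof (Rabs_pos y).
  split; apply NNPP; intro Hne; pose proof (Rabs_pos_lt _ Hne); lra.
Qed.

Lemma Rabs_pm1 s : s = 1 \/ s = -1 -> Rabs s = 1.
Proof. intros [-> | ->]; [apply Rabs_R1 | rewrite Rabs_left; lra]. Qed.

Lemma const_pm1_value T v : const_pm1 T v ->
  exists s, (s = 1 \/ s = -1) /\ ae_on T (fun t => v t = s).
Proof. intros [H|H]; [exists 1 | exists (-1)]; auto. Qed.

Section SingularArc.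

Variables (T l0 a b : R) (psiA psiB uA uB : R -> R).
Hypotheses (Ha : 0 <= a) (Hab : a < b) (HbT : b <= T)
  (HacA : abs_cont_on T psiA) (HacB : abs_cont_on T psiB)
  (Hmax : ae_on T (fun t => uA t * psiA t + uB t * psiB t = l0 /\
                            Rabs (psiA t) + Rabs (psiB t) = l0))
  (Hsing : forall t, a < t < b -> psiA t = 0).

Lemma singular_arc_const_switching :
  ae_on T (fun t => derivable_pt_lim psiA t 0 /\ derivable_pt_lim psiB t 0) ->
  ~ (psiA 0 = 0 /\ psiB 0 = 0) ->
  (forall t, 0 <= t <= T -> psiA t = 0) /\ const_pm1 T uB.
Proof.
  intros Hder Hnz.
  assert (HconstA := abs_cont_deriv0_const T psiA HacA (ae_on_impl _ _ _ Hder (fun _ _ H => proj1 H))).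
  assert (HconstB := abs_cont_deriv0_const T psiB HacB (ae_on_impl _ _ _ Hder (fun _ _ H => proj2 H))).
  assert (HzA : forall t, 0 <= t <= T -> psiA t = 0).
  { intros t Ht. rewrite (HconstA ((a + b) / 2) t) by lra. apply Hsing. lra. }
  split; [exact HzA|].
  set (k := psiB 0).
  assert (Hk : k <> 0) by (intro Hk; apply Hnz; split; [apply HzA; lra | exact Hk]).
  assert (Hu : ae_on T (fun t => uB t * k = Rabs k)).
  { apply (ae_on_impl _ _ _ Hmax). intros t Ht [E1 E2].
    rewrite (HzA t Ht), (HconstB 0 t) in E1, E2 by lra. rewrite Rabs_R0 in E2. fold k in E1, E2. lra. }
  destruct (Rlt_dec 0 k); [left | right]; apply (ae_on_impl _ _ _ Hu); intros t _ E;
    apply (Rmult_eq_reg_r k); auto; [rewrite Rabs_right in E | rewrite Rabs_left in E]; lra.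
Qed.

Lemma singular_arc_controls_vanish kA kB : kA <> 0 -> kB <> 0 ->
  ae_on T (fun t => derivable_pt_lim psiA t (kA * uB t) /\ derivable_pt_lim psiB t (kB * uA t)) ->
  ae_on T (fun t => uA t = 0 /\ uB t = 0).
Proof.
  intros HkA HkB Hder.
  destruct (ae_on_meets_interval T _ a b Ha Hab HbT (ae_on_and _ _ _ Hder Hmax))
    as [t [Ht [[HdA _] [E1 _]]]].
  (* [psiA] vanishes around the singular time [t], hence so do [uB t] and the constant [l0] *)
  assert (HuB : kA * uB t = 0).
  { apply (derivable_pt_lim_vanishing psiA ((a + t) / 2) ((t + b) / 2) t); try lra; auto.
    intros s Hs. apply Hsing. lra. }
  apply Rmult_integral in HuB as [|HuB]; [contradiction|].
  rewrite Hsing, HuB in E1 by lra.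
  assert (Hzero : ae_on T (fun t => psiA t = 0 /\ psiB t = 0)).
  { apply (ae_on_impl _ _ _ Hmax). intros s _ [_ E]. apply Rabs_add_eq0. lra. }
  assert (HzA := abs_cont_ae_zero T psiA ltac:(lra) HacA (ae_on_impl _ _ _ Hzero (fun _ _ H => proj1 H))).
  assert (HzB := abs_cont_ae_zero T psiB ltac:(lra) HacB (ae_on_impl _ _ _ Hzero (fun _ _ H => proj2 H))).
  apply (ae_on_impl _ _ _ Hder). intros s Hs [DA DB].
  apply (derivable_pt_lim_vanishing _ 0 T s) in DA, DB; try lra; auto.
  apply Rmult_integral in DA as [|DA]; [contradiction|].
  apply Rmult_integral in DB as [|DB]; [contradiction|]. auto.
Qed.

Lemma singular_arc_switching k :
  ae_on T (fun t => derivable_pt_lim psiA t (k * uB t) /\ derivable_pt_lim psiB t (- k * uA t)) ->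
  (k = 0 -> ~ (psiA 0 = 0 /\ psiB 0 = 0)) ->
  ~ ae_on T (fun t => uA t = 0 /\ uB t = 0) ->
  (forall t, 0 <= t <= T -> psiA t = 0) /\ const_pm1 T uB.
Proof.
  intros Hder Hnz Hmoves. destruct (Req_dec k 0) as [->|Hk].
  - apply singular_arc_const_switching; [|exact (Hnz eq_refl)].
    apply (ae_on_impl _ _ _ Hder). intros t _ [DA DB].
    rewrite Rmult_0_l in DA. rewrite Ropp_0, Rmult_0_l in DB. auto.
  - exfalso. apply Hmoves, (singular_arc_controls_vanish k (- k)); auto.
    intro; apply Hk; lra.
Qed.

End SingularArc.

Lemma V3_ext v w : vx v = vx w -> vy v = vy w -> vz v = vz w -> v = w.
Proof. destruct v, w; simpl; intros; subst; reflexivity. Qed.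

Lemma comp_field_of i w p : (i = 1 \/ i = 2)%nat -> Defs.comp (i - 1) (field_of w p) = w i.
Proof. intros [-> | ->]; unfold Defs.comp, field_of, vadd, vscal, X; simpl; ring. Qed.

Definition dH_dp (c : V3) (w : nat -> R) (k : nat) : R :=
  match k with
  | 0%nat => w 2%nat * vz c / 2
  | 1%nat => - (w 1%nat * vz c / 2)
  | _ => 0
  end.

Lemma derivable_Hfun_p c p w k :
  derivable_pt_lim (fun s => Hfun c (vadd p (vscal s (ek k))) w) 0 (dH_dp c w k).
Proof.
  apply derivable_pt_lim_affine. intros h.
  destruct k as [|[|k]]; unfold Hfun, dot, X, vadd, vscal, ek, dH_dp; simpl; field.
Qed.

Lemma derivable_Hfun_lambda c p w k :
  derivable_pt_lim (fun s => Hfun (vadd c (vscal s (ek k))) p w) 0 (Defs.comp k (field_of w p)).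
Proof.
  apply derivable_pt_lim_affine. intros h.
  destruct k as [|[|k]]; unfold Hfun, dot, X, vadd, vscal, ek, field_of, Defs.comp; simpl; field.
Qed.

Lemma admissible_deriv_coord T g u i : admissible T g u -> (i = 1 \/ i = 2)%nat ->
  ae_on T (fun t => derivable_pt_lim (fun s => Defs.comp (i - 1) (g s)) t (u i t)).
Proof.
  intros (_ & _ & _ & Hd) Hi. apply (ae_on_impl _ _ _ Hd). intros t _ H.
  rewrite <- (comp_field_of i (fun j => u j t) (g t) Hi). apply H. destruct Hi; subst; lia.
Qed.

Lemma admissible_const_of_controls_zero T g u : admissible T g u ->
  ae_on T (fun t => u 1%nat t = 0 /\ u 2%nat t = 0) -> forall t, 0 <= t <= T -> g t = g 0.
Proof.
  intros Hadm Hz t Ht. destruct Hadm as (HT & Hac & _ & Hd).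
  assert (Hk : forall k, (k <= 2)%nat -> Defs.comp k (g t) = Defs.comp k (g 0)).
  { intros k Hk. apply (abs_cont_deriv0_const T _ (Hac k Hk)); try lra.
    apply (ae_on_impl _ _ _ (ae_on_and _ _ _ Hd Hz)). intros s _ [D [Z1 Z2]].
    replace 0 with (Defs.comp k (field_of (fun i => u i s) (g s))); [exact (D k Hk)|].
    unfold field_of, vadd, vscal. simpl. rewrite Z1, Z2. destruct k as [|[|k]]; simpl; ring. }
  apply V3_ext; [apply (Hk 0%nat) | apply (Hk 1%nat) | apply (Hk 2%nat)]; lia.
Qed.

Lemma extremal_adjoint T l g u : extremal_pair T l g u ->
  ae_on T (fun t => forall k, (k <= 2)%nat ->
    derivable_pt_lim (fun s => Defs.comp k (l s)) t (- dH_dp (l t) (fun i => u i t) k)).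
Proof.
  intros (_ & _ & _ & Hder & _). apply (ae_on_impl _ _ _ Hder). intros t _ H k Hk.
  destruct (H k Hk) as [[d [Hd Hl]] _].
  rewrite (uniqueness_limite _ _ _ _ Hd (derivable_Hfun_p _ _ _ k)) in Hl. exact Hl.
Qed.

Lemma extremal_vz_const T l g u : extremal_pair T l g u ->
  forall t, 0 <= t <= T -> vz (l t) = vz (l 0).
Proof.
  intros Hext t Ht. pose proof Hext as (Hadm & Hacl & _).
  apply (abs_cont_deriv0_const T (fun s => vz (l s)) (Hacl 2%nat ltac:(lia))); [|lra | exact Ht].
  apply (ae_on_impl _ _ _ (extremal_adjoint T l g u Hext)). intros s _ H.
  specialize (H 2%nat ltac:(lia)). simpl in H. rewrite Ropp_0 in H. exact H.
Qed.

(* With [vz l] frozen to its constant value [L], these are the switching functions [phi 1]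
   and [phi 2] written through the components of [l] and [g]. *)
Definition switch1 (L : R) (l g : R -> V3) (t : R) : R := vx (l t) - L / 2 * vy (g t).
Definition switch2 (L : R) (l g : R -> V3) (t : R) : R := vy (l t) + L / 2 * vx (g t).

Lemma phi_switch l g t L : vz (l t) = L ->
  phi 1 l g t = switch1 L l g t /\ phi 2 l g t = switch2 L l g t.
Proof. intros HL. unfold phi, switch1, switch2, dot, X. simpl. rewrite HL. split; field. Qed.

Lemma switch_abs_cont_deriv T l g u L : extremal_pair T l g u ->
  (forall t, 0 <= t <= T -> vz (l t) = L) ->
  abs_cont_on T (switch1 L l g) /\ abs_cont_on T (switch2 L l g) /\
  ae_on T (fun t => derivable_pt_lim (switch1 L l g) t (- L * u 2%nat t) /\
                    derivable_pt_lim (switch2 L l g) t (L * u 1%nat t)).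
Proof.
  intros Hext HL. pose proof Hext as ((_ & Hacg & _) & Hacl & _).
  split; [|split].
  - apply (abs_cont_on_ext T (fun t => 1 * vx (l t) + (- L / 2) * vy (g t)));
      [intros; unfold switch1; field|].
    apply abs_cont_on_lin; [apply (Hacl 0%nat) | apply (Hacg 1%nat)]; lia.
  - apply (abs_cont_on_ext T (fun t => 1 * vy (l t) + L / 2 * vx (g t)));
      [intros; unfold switch2; field|].
    apply abs_cont_on_lin; [apply (Hacl 1%nat) | apply (Hacg 0%nat)]; lia.
  - pose proof (admissible_deriv_coord T g u 1 (proj1 Hext) ltac:(auto)) as Hx.
    pose proof (admissible_deriv_coord T g u 2 (proj1 Hext) ltac:(auto)) as Hy.
    apply (ae_on_impl _ _ _ (ae_on_and _ _ _ (extremal_adjoint T l g u Hext) (ae_on_and _ _ _ Hx Hy))).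
    intros t Ht [Hl [Dx Dy]].
    pose proof (Hl 0%nat ltac:(lia)) as Dlx. pose proof (Hl 1%nat ltac:(lia)) as Dly.
    simpl in Dlx, Dly, Dx, Dy. rewrite (HL t Ht) in Dlx, Dly. split.
    + replace (- L * u 2%nat t) with (- (u 2%nat t * L / 2) - L / 2 * u 2%nat t) by field.
      exact (derivable_pt_lim_minus _ _ t _ _ Dlx (derivable_pt_lim_scal _ (L / 2) t _ Dy)).
    + replace (L * u 1%nat t) with (- - (u 1%nat t * L / 2) + L / 2 * u 1%nat t) by field.
      exact (derivable_pt_lim_plus _ _ t _ _ Dly (derivable_pt_lim_scal _ (L / 2) t _ Dx)).
Qed.

Lemma extremal_maximum_switch T l g u L : extremal_pair T l g u ->
  (forall t, 0 <= t <= T -> vz (l t) = L) ->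
  exists l0, ae_on T (fun t =>
    u 1%nat t * switch1 L l g t + u 2%nat t * switch2 L l g t = l0 /\
    Rabs (switch1 L l g t) + Rabs (switch2 L l g t) = l0).
Proof.
  intros (_ & _ & _ & _ & l0 & _ & Hmax) HL. exists l0.
  apply (ae_on_impl _ _ _ Hmax). intros t Ht. destruct (phi_switch l g t L (HL t Ht)) as [<- <-]. auto.
Qed.

Lemma switch_not_both_zero T l g u : extremal_pair T l g u -> vz (l 0) = 0 ->
  ~ (switch1 0 l g 0 = 0 /\ switch2 0 l g 0 = 0).
Proof.
  intros ((HT & _) & _ & Hnz & _) Hz [Z1 Z2]. apply (Hnz 0 ltac:(lra)).
  unfold switch1, switch2 in Z1, Z2. apply V3_ext; simpl; [lra | lra | exact Hz].
Qed.

Lemma extremal_singular_arc T l g u j a b :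
  extremal_pair T l g u -> (exists t, 0 <= t <= T /\ g t <> g 0) -> (j = 1 \/ j = 2)%nat ->
  0 <= a -> a < b -> b <= T -> (forall t, a < t < b -> phi j l g t = 0) ->
  (forall t, 0 <= t <= T -> phi j l g t = 0) /\ const_pm1 T (u (3 - j)%nat).
Proof.
  intros Hext [t0 [Ht0 Hmove]] Hj Ha Hab HbT Hsing.
  set (L := vz (l 0)).
  assert (HL : forall t, 0 <= t <= T -> vz (l t) = L) by exact (extremal_vz_const T l g u Hext).
  assert (Hphi : forall t, 0 <= t <= T ->
    phi 1 l g t = switch1 L l g t /\ phi 2 l g t = switch2 L l g t)
    by (intros t Ht; apply phi_switch, HL, Ht).
  destruct (switch_abs_cont_deriv T l g u L Hext HL) as [Hac1 [Hac2 Hder]].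
  destruct (extremal_maximum_switch T l g u L Hext HL) as [l0 Hmax'].
  assert (Hnz0 : L = 0 -> ~ (switch1 L l g 0 = 0 /\ switch2 L l g 0 = 0))
    by (intros HL0; rewrite HL0; exact (switch_not_both_zero T l g u Hext HL0)).
  assert (Hmoves : ~ ae_on T (fun t => u 1%nat t = 0 /\ u 2%nat t = 0))
    by (intro Hz; exact (Hmove (admissible_const_of_controls_zero T g u (proj1 Hext) Hz t0 Ht0))).
  destruct Hj as [-> | ->].
  - assert (Hsing1 : forall t, a < t < b -> switch1 L l g t = 0)
      by (intros t Ht; rewrite <- (proj1 (Hphi t ltac:(lra))); auto).
    destruct (singular_arc_switching T l0 a b (switch1 L l g) (switch2 L l g) (u 1%nat) (u 2%nat)
                Ha Hab HbT Hac1 Hac2 Hmax' Hsing1 (- L)) as [Hz Hu].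
    + apply (ae_on_impl _ _ _ Hder). intros t _. rewrite Ropp_involutive. auto.
    + intro HL0. apply Hnz0. lra.
    + exact Hmoves.
    + split; [intros t Ht; rewrite (proj1 (Hphi t Ht)); auto | exact Hu].
  - assert (Hsing2 : forall t, a < t < b -> switch2 L l g t = 0)
      by (intros t Ht; rewrite <- (proj2 (Hphi t ltac:(lra))); auto).
    assert (Hmax2 : ae_on T (fun t =>
      u 2%nat t * switch2 L l g t + u 1%nat t * switch1 L l g t = l0 /\
      Rabs (switch2 L l g t) + Rabs (switch1 L l g t) = l0))
      by (apply (ae_on_impl _ _ _ Hmax'); intros t _ [E1 E2]; split; lra).
    destruct (singular_arc_switching T l0 a b (switch2 L l g) (switch1 L l g) (u 2%nat) (u 1%nat)
                Ha Hab HbT Hac2 Hac1 Hmax2 Hsing2 L) as [Hz Hu].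
    + apply (ae_on_impl _ _ _ Hder). intros t _ []. auto.
    + intros HL0 []. apply Hnz0; auto.
    + intros Hz. apply Hmoves, (ae_on_impl _ _ _ Hz). intros t _ []. auto.
    + split; [intros t Ht; rewrite (proj2 (Hphi t Ht)); auto | exact Hu].
Qed.

Lemma extremal_pair_horizontal_const T g u (c : V3) l0 :
  admissible T g u -> c <> vzero -> vz c = 0 -> 0 <= l0 ->
  ae_on T (fun t => u 1%nat t * vx c + u 2%nat t * vy c = l0 /\ Rabs (vx c) + Rabs (vy c) = l0) ->
  extremal_pair T (fun _ => c) g u.
Proof.
  intros Hadm Hc Hcz Hl0 Hmax. pose proof Hadm as (_ & _ & _ & Hd).
  assert (Hphi : forall t, phi 1 (fun _ => c) g t = vx c /\ phi 2 (fun _ => c) g t = vy c)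
    by (intros t; unfold phi, dot, X; simpl; rewrite Hcz; split; ring).
  split; [exact Hadm|]. split; [intros k _; apply abs_cont_on_const|].
  split; [intros t _; exact Hc|]. split.
  - apply (ae_on_impl _ _ _ Hd). intros t _ Hdt k Hk. split.
    + exists (dH_dp c (fun i => u i t) k). split; [apply derivable_Hfun_p|].
      replace (- dH_dp c (fun i => u i t) k) with 0
        by (destruct k as [|[|k]]; simpl; rewrite ?Hcz; field).
      apply derivable_pt_lim_const.
    + exists (Defs.comp k (field_of (fun i => u i t) (g t))).
      split; [apply derivable_Hfun_lambda | exact (Hdt k Hk)].
  - exists l0. split; [exact Hl0|]. apply (ae_on_impl _ _ _ Hmax). intros t _.
    destruct (Hphi t) as [-> ->]. auto.
Qed.

Lemma const_control_extremal_lift T g u i : admissible T g u -> (i = 1 \/ i = 2)%nat ->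
  const_pm1 T (u i) ->
  exists l, extremal_pair T l g u /\ (forall t, 0 <= t <= T -> phi (3 - i)%nat l g t = 0).
Proof.
  intros Hadm Hi Hu. destruct (const_pm1_value T (u i) Hu) as [s [Hs Hus]].
  assert (Hss : s * s = 1) by (destruct Hs as [-> | ->]; ring).
  assert (Hs0 : s <> 0) by (destruct Hs as [-> | ->]; lra).
  pose proof (Rabs_pm1 s Hs) as Habs.
  destruct Hi as [-> | ->]; [exists (fun _ => mkV3 s 0 0) | exists (fun _ => mkV3 0 s 0)];
    (split; [|intros t _; unfold phi, dot, X; simpl; ring]);
    apply (extremal_pair_horizontal_const T g u _ 1 Hadm); simpl; try lra;
    try (intro H; injection H; lra);
    apply (ae_on_impl _ _ _ Hus); intros t _ Ht; simpl; rewrite Ht, Rabs_R0; lra.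
Qed.

Lemma admissible_coord_increment_le T g u i s : admissible T g u -> (i = 1 \/ i = 2)%nat ->
  Rabs s <= 1 -> s * (Defs.comp (i - 1) (g T) - Defs.comp (i - 1) (g 0)) <= T.
Proof.
  intros Hadm Hi Hs. pose proof Hadm as (HT & Hac & Hu & _).
  assert (Hk : (i - 1 <= 2)%nat) by lia.
  enough (s * Defs.comp (i - 1) (g T) - s * Defs.comp (i - 1) (g 0) <= 1 * (T - 0)) by lra.
  apply (abs_cont_increment_le T 1 (fun t => s * Defs.comp (i - 1) (g t))); try lra.
  - apply (abs_cont_on_ext T (fun t => s * Defs.comp (i - 1) (g t) + 0 * t)); [intros; cbv beta; ring|].
    apply abs_cont_on_lin; [exact (Hac _ Hk) | apply abs_cont_on_id].
  - apply (ae_on_impl _ _ _ (ae_on_and _ _ _ (admissible_deriv_coord T g u i Hadm Hi) (proj2 (Hu i Hi)))).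
    intros t _ [D Hut]. exists (s * u i t). split; [exact (derivable_pt_lim_scal _ s t _ D)|].
    pose proof (Rle_abs (s * u i t)). rewrite Rabs_mult in H.
    pose proof (Rabs_pos s). pose proof (Rabs_pos (u i t)). nra.
Qed.

Lemma const_control_coord_increment T g u i s : admissible T g u -> (i = 1 \/ i = 2)%nat ->
  ae_on T (fun t => u i t = s) -> Defs.comp (i - 1) (g T) - Defs.comp (i - 1) (g 0) = s * T.
Proof.
  intros Hadm Hi Hus. pose proof Hadm as (HT & Hac & _).
  assert (Hk : (i - 1 <= 2)%nat) by lia.
  enough (Defs.comp (i - 1) (g T) - s * T = Defs.comp (i - 1) (g 0) - s * 0) by lra.
  apply (abs_cont_deriv0_const T (fun t => Defs.comp (i - 1) (g t) - s * t)); try lra.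
  - apply (abs_cont_on_ext T (fun t => 1 * Defs.comp (i - 1) (g t) + (- s) * t)); [intros; cbv beta; ring|].
    apply abs_cont_on_lin; [exact (Hac _ Hk) | apply abs_cont_on_id].
  - apply (ae_on_impl _ _ _ (ae_on_and _ _ _ (admissible_deriv_coord T g u i Hadm Hi) Hus)).
    intros t _ [D Hut]. replace 0 with (u i t - s * 1) by lra.
    exact (derivable_pt_lim_minus _ _ t _ _ D (derivable_pt_lim_scal _ s t _ (derivable_pt_lim_id t))).
Qed.

Lemma const_control_time_minimizer T g u i : admissible T g u -> (i = 1 \/ i = 2)%nat ->
  const_pm1 T (u i) -> time_minimizer T g.
Proof.
  intros Hadm Hi Hu T' g' u' Hadm' H0 HT.
  destruct (const_pm1_value T (u i) Hu) as [s [Hs Hus]].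
  pose proof (const_control_coord_increment T g u i s Hadm Hi Hus) as Hinc.
  pose proof (admissible_coord_increment_le T' g' u' i s Hadm' Hi
                ltac:(rewrite (Rabs_pm1 s Hs); lra)) as Hle.
  rewrite H0, HT, Hinc in Hle. destruct Hs as [-> | ->]; lra.
Qed.

Theorem mainTheorem3 :
  (forall (T : R) (l g : R -> V3) (u : nat -> R -> R) (j : nat) (a b : R),
     extremal_pair T l g u ->
     (exists t, 0 <= t <= T /\ g t <> g 0) ->
     (j = 1 \/ j = 2)%nat ->
     0 <= a -> a < b -> b <= T ->
     (forall t, a < t < b -> phi j l g t = 0) ->
     (forall t, 0 <= t <= T -> phi j l g t = 0) /\ const_pm1 T (u (3 - j)%nat))
  /\
  (forall (T : R) (g : R -> V3) (u : nat -> R -> R) (i : nat),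
     admissible T g u ->
     (i = 1 \/ i = 2)%nat ->
     const_pm1 T (u i) ->
     exists l : R -> V3, extremal_pair T l g u /\
       (forall t, 0 <= t <= T -> phi (3 - i)%nat l g t = 0))
  /\
  (forall (T : R) (g : R -> V3) (u : nat -> R -> R) (i : nat),
     admissible T g u ->
     (i = 1 \/ i = 2)%nat ->
     const_pm1 T (u i) ->
     time_minimizer T g).
Proof.
  split; [|split].
  - exact extremal_singular_arc.
  - exact const_control_extremal_lift.
  - exact const_control_time_minimizer.
Qed.
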